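(* Let $n\ge1$, $f\in L^2([0,1]^n)$ and $\pi\in S_n$. Then $f$ and $\pi(f)$ have the same best shifted $L$-statistic approximation $f_L$, and $\|\pi(f)-f_L\|=\|f-f_L\|$.
   Context: $L^2([0,1]^n)$ is the space of square integrable real functions on $[0,1]^n$ modulo equality almost everywhere, with norm $\|g\|=(\int_{[0,1]^n}g^2\,d\mathbf{x})^{1/2}$. $S_n$ is the symmetric group on $\{1,\ldots,n\}$, acting on functions by $\pi(f)(x_1,\ldots,x_n)=f(x_{\pi(1)},\ldots,x_{\pi(n)})$. For $\mathbf{x}\in[0,1]^n$, $x_{(1)}\le\cdots\le x_{(n)}$ are its coordinates in ascending order and $\mathrm{os}_k(\mathbf{x})=x_{(k)}$. Let $V_L$ be the span of $\mathrm{os}_1,\ldots,\mathrm{os}_n$ and the constant $1$ (shifted $L$-statistic functions). The best shifted $L$-statistic approximation $f_L$ of $f$ is the unique $g\in V_L$ minimizing $\|f-g\|$. *)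

From HB Require Import structures.
From mathcomp Require Import all_boot all_order all_algebra all_fingroup.
From mathcomp Require Import all_classical all_reals all_analysis.
Set Implicit Arguments. Unset Strict Implicit. Unset Printing Implicit Defensive.
Import Order.TTheory GRing.Theory Num.Theory.
Local Open Scope classical_set_scope.
Local Open Scope ring_scope.

Section Defs.
Variable R : realType.

(* Iterated Lebesgue integral over [0,1]^n of a function on n-tuples
   (points of R^n); for nonnegative measurable integrands this is the
   integral w.r.t. the n-dimensional Lebesgue measure on [0,1]^n (Tonelli). *)
Fixpoint iint01 (n : nat) : (n.-tuple R -> \bar R) -> \bar R :=
  match n with
  | 0 => fun F => F [tuple]
  | m.+1 => fun F =>
      (\int[@lebesgue_measure R]_(x in `[0%R, 1%R]) iint01 (fun t => F (cons_tuple x t)))%E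
  end.

Definition sq_int (n : nat) (f : n.-tuple R -> R) : Prop :=
  measurable_fun [set: n.-tuple R] f /\
  (iint01 (fun x => (f x ^+ 2)%:E) < +oo)%E.

Definition L2norm (n : nat) (f : n.-tuple R -> R) : R :=
  Num.sqrt (fine (iint01 (fun x => (f x ^+ 2)%:E))).

(* k-th order statistic (0-indexed k : 'I_n, i.e. os_{k+1} in the paper) *)
Definition os (n : nat) (k : 'I_n) (x : n.-tuple R) : R :=
  nth 0 (sort <=%R (tval x)) k.

Definition in_VL (n : nat) (g : n.-tuple R -> R) : Prop :=
  exists (c0 : R) (c : 'I_n -> R),
    forall x, g x = c0 + \sum_(k < n) c k * os k x.

Definition best_L_approx (n : nat) (f g : n.-tuple R -> R) : Prop :=
  in_VL g /\
  forall h, in_VL h -> L2norm (f \- g) <= L2norm (f \- h).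

Definition perm_act (n : nat) (pi : 'S_n) (f : n.-tuple R -> R)
  : n.-tuple R -> R :=
  fun x => f [tuple tnth x (pi i) | i < n].

End Defs.

From HB Require Import structures.
From mathcomp Require Import all_boot all_order all_algebra all_fingroup.
From mathcomp Require Import all_classical all_reals all_analysis.
From mathcomp Require Import measurable_realfun.
Import Order.TTheory GRing.Theory Num.Theory.
Set Implicit Arguments. Unset Strict Implicit.
Local Open Scope classical_set_scope.
Local Open Scope ring_scope.

(* Every element of V_L is a symmetric function, because the order statistics of a point
   do not depend on the order of its coordinates.  The integral over [0,1]^n is invariant
   under permutations of the coordinates: for a permutation fixing the first coordinate by
   induction on n, for the swap of the first two coordinates by Tonelli's theorem, and in
   general because every permutation is a product of such permutations.  Hence for every h in V_L,
   ||pi(f) - h|| = ||pi(f - h)|| = ||f - h||, so f and pi(f) are at the same distance from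
   every element of V_L and have the same best approximations. *)

Section integral_setX.
Local Open Scope ereal_scope.
Context d1 d2 (T1 : measurableType d1) (T2 : measurableType d2) (R : realType).

Lemma integral_patch_setX (m : {measure set T2 -> \bar R}) (A : set T1)
    (B : set T2) (f : T1 * T2 -> \bar R) x : A x ->
  \int[m]_(y in B) f (x, y) = \int[m]_y (f \_ (A `*` B)) (x, y).
Proof.
move=> Ax; rewrite integral_mkcond; apply: eq_integral => y _.
by rewrite /patch in_setX /= (mem_set Ax).
Qed.

Lemma iterated_integral_setX (m1 : {measure set T1 -> \bar R})
    (m2 : {measure set T2 -> \bar R}) (A : set T1) (B : set T2)
    (f : T1 * T2 -> \bar R) :
  \int[m1]_(x in A) \int[m2]_(y in B) f (x, y) =
  \int[m1]_x \int[m2]_y (f \_ (A `*` B)) (x, y).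
Proof.
rewrite integral_mkcond; apply: eq_integral => x _; rewrite /patch.
case: ifPn => [/set_mem/integral_patch_setX -> //|xA].
by rewrite integral0_eq // => y _; rewrite in_setX (negbTE xA).
Qed.

End integral_setX.

Section fubini_tonelli_setX.
Local Open Scope ereal_scope.
Context d1 d2 (T1 : measurableType d1) (T2 : measurableType d2) (R : realType).

Lemma fubini_tonelli_setX (m1 : {sigma_finite_measure set T1 -> \bar R})
    (m2 : {sigma_finite_measure set T2 -> \bar R}) (A : set T1) (B : set T2)
    (f : T1 * T2 -> \bar R) :
  measurable A -> measurable B -> measurable_fun setT f -> (forall z, 0 <= f z) ->
  \int[m1]_(x in A) \int[m2]_(y in B) f (x, y) =
  \int[m2]_(y in B) \int[m1]_(x in A) f (x, y).
Proof.
move=> mA mB mf f0.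
have mAB : measurable (A `*` B) by exact: measurableX.
rewrite iterated_integral_setX (iterated_integral_setX m2 m1 B A (fun z => f (z.2, z.1))).
rewrite fubini_tonelli; last 2 first.
- by apply/(measurable_restrictT _ mAB); exact: measurable_funS mf.
- by move=> z; rewrite /patch; case: ifP.
apply: eq_integral => y _; apply: eq_integral => x _.
by rewrite /patch !in_setX andbC.
Qed.

End fubini_tonelli_setX.

Section iterated_integral.
Variable R : realType.
Local Notation mu := (@lebesgue_measure R).
Local Notation I := (`[0%R, 1%R]%classic : set R).
Local Open Scope ereal_scope.

Lemma iint01_ge0 n (F : n.-tuple R -> \bar R) :
  (forall x, 0 <= F x) -> 0 <= iint01 F.
Proof.
elim: n F => [|n IH] F F0 /=; first exact: F0.
by apply: integral_ge0 => x _; apply: IH.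
Qed.

Lemma measurable_iint01 n d (T : measurableType d)
    (G : T * n.-tuple R -> \bar R) :
  measurable_fun setT G -> (forall z, 0 <= G z) ->
  measurable_fun setT (fun y => iint01 (fun t => G (y, t))).
Proof.
elim: n d T G => [|n IH] d T G mG G0 /=.
  by apply: measurableT_comp mG _; apply: measurable_fun_pair.
pose H (z : T * R) := iint01 (fun t => G (z.1, cons_tuple z.2 t)).
have mH : measurable_fun setT H.
  apply: (IH _ _ (fun z => G (z.1.1, cons_tuple z.1.2 z.2))) => //.
  apply: measurableT_comp mG _; apply: measurable_fun_pair.
    exact: measurableT_comp.
  by apply: measurable_cons; [exact: measurableT_comp|exact: measurable_snd].
have mTI : measurable ([set: T] `*` I) by exact: measurableX.
have -> : (fun y => \int[mu]_(x in I) H (y, x)) = fubini_F mu (H \_ ([set: T] `*` I)).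
  by apply/funext => y; exact: integral_patch_setX.
apply: measurable_fun_fubini_tonelli_F.
  by apply/(measurable_restrictT _ mTI); exact: measurable_funS mH.
by move=> z; rewrite /patch; case: ifP => // _; apply: iint01_ge0.
Qed.

End iterated_integral.

Section reindex_tuple.
Variable R : realType.

(* [perm_act p f] is convertible to [f \o reindex_tuple p]. *)
Definition reindex_tuple n (g : 'I_n -> 'I_n) (x : n.-tuple R) : n.-tuple R :=
  [tuple tnth x (g i) | i < n].

Lemma tnth_reindex_tuple n (g : 'I_n -> 'I_n) x i :
  tnth (reindex_tuple g x) i = tnth x (g i).
Proof. by rewrite tnth_map tnth_ord_tuple. Qed.

Lemma reindex_tuple_comp n (g h : 'I_n -> 'I_n) x :
  reindex_tuple (h \o g) x = reindex_tuple g (reindex_tuple h x).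
Proof. by apply: eq_from_tnth => i; rewrite !tnth_reindex_tuple. Qed.

Lemma measurable_reindex_tuple n (g : 'I_n -> 'I_n) :
  measurable_fun setT (reindex_tuple g).
Proof.
apply/measurable_fun_tnthP => i.
rewrite (_ : _ \o _ = @tnth n R ^~ (g i)); first exact: measurable_tnth.
by apply/funext => x /=; rewrite tnth_reindex_tuple.
Qed.

Definition lift0 n (g : 'I_n -> 'I_n) (i : 'I_n.+1) : 'I_n.+1 :=
  if unlift ord0 i is Some j then lift ord0 (g j) else ord0.

Lemma fix0_lift0 n (g : 'I_n.+1 -> 'I_n.+1) : injective g -> g ord0 = ord0 ->
  exists2 g' : 'I_n -> 'I_n, injective g' & g = lift0 g'.
Proof.
move=> ginj g0; pose g' j := odflt j (unlift ord0 (g (lift ord0 j))).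
have gS j : g (lift ord0 j) = lift ord0 (g' j).
  rewrite /g'; case: unliftP => [//|] gj.
  move: (ginj _ _ (etrans gj (esym g0))) => /eqP.
  by rewrite eq_sym (negbTE (neq_lift _ _)).
exists g'.
  by move=> i j eq_ij; apply/(lift_inj (h := ord0))/ginj; rewrite !gS eq_ij.
by apply/funext => i; rewrite /lift0; case: unliftP => [j|] ->.
Qed.

Lemma reindex_tuple_lift0 n (g : 'I_n -> 'I_n) a (t : n.-tuple R) :
  reindex_tuple (lift0 g) (cons_tuple a t) = cons_tuple a (reindex_tuple g t).
Proof.
apply: eq_from_tnth => i; rewrite tnth_reindex_tuple /lift0.
by case: unliftP => [j|] ->; rewrite ?tnth0 // !tnthS tnth_reindex_tuple.
Qed.

Lemma reindex_tuple_swap01 n a b (t : n.-tuple R) :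
  reindex_tuple (tperm ord0 (lift ord0 ord0)) (cons_tuple a (cons_tuple b t)) =
  cons_tuple b (cons_tuple a t).
Proof.
apply: eq_from_tnth => -[[|[|i]] lti]; rewrite tnth_reindex_tuple.
- by rewrite (_ : Ordinal lti = ord0) ?tpermL //; apply: val_inj.
- by rewrite (_ : Ordinal lti = lift ord0 ord0) ?tpermR //; apply: val_inj.
by rewrite tpermD // !(tnth_nth 0).
Qed.

End reindex_tuple.

Section iint01_invariance.
Variable R : realType.
Local Notation mu := (@lebesgue_measure R).
Local Notation I := (`[0%R, 1%R]%classic : set R).
Local Open Scope ereal_scope.

Definition iint01_invariant n (g : 'I_n -> 'I_n) :=
  forall F : n.-tuple R -> \bar R, measurable_fun setT F -> (forall x, 0 <= F x) ->
  iint01 (F \o reindex_tuple g) = iint01 F.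

Lemma iint01_invariant_comp n (g h : 'I_n -> 'I_n) :
  iint01_invariant g -> iint01_invariant h -> iint01_invariant (h \o g).
Proof.
move=> ig ih F mF F0.
rewrite (_ : F \o _ = (F \o reindex_tuple g) \o reindex_tuple h); last first.
  by apply/funext => x /=; rewrite reindex_tuple_comp.
rewrite ih ?ig //.
- by apply: measurableT_comp mF _; exact: measurable_reindex_tuple.
- by move=> x; exact: F0.
Qed.

Lemma iint01_invariant_lift0 n (g : 'I_n -> 'I_n) :
  iint01_invariant g -> iint01_invariant (lift0 g).
Proof.
move=> ig F mF F0 /=; apply: eq_integral => a _.
have mFa : measurable_fun setT (fun t => F (cons_tuple a t)).
  by apply: measurableT_comp mF _; exact: measurable_cons.
rewrite -(ig _ mFa) //; congr iint01; apply/funext => t /=.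
by rewrite reindex_tuple_lift0.
Qed.

Lemma iint01_invariant_swap01 n :
  iint01_invariant (tperm (ord0 : 'I_n.+2) (lift ord0 ord0)).
Proof.
move=> F mF F0.
pose K (z : R * R) := iint01 (fun t => F (cons_tuple z.1 (cons_tuple z.2 t))).
have mK : measurable_fun setT K.
  apply: (measurable_iint01 (G := fun z => F (cons_tuple z.1.1 (cons_tuple z.1.2 z.2)))).
    apply: measurableT_comp mF _; apply: measurable_cons.
      by apply: measurableT_comp; [exact: measurable_fst|exact: measurable_fst].
    apply: measurable_cons; last exact: measurable_snd.
    by apply: measurableT_comp; [exact: measurable_snd|exact: measurable_fst].
  by move=> z; exact: F0.
transitivity (\int[mu]_(x in I) \int[mu]_(y in I) K (y, x)).
  apply: eq_integral => x _; apply: eq_integral => y _.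
  by congr iint01; apply/funext => t; congr F; exact: reindex_tuple_swap01.
rewrite (fubini_tonelli_setX mu mu (f := fun z => K (z.2, z.1))) //.
- by apply: measurableT_comp mK _; exact: measurable_fun_pair.
- by move=> z; apply: iint01_ge0.
Qed.

Lemma iint01_invariant_tperm0 n :
  (forall g : 'I_n.+1 -> 'I_n.+1, injective g -> g ord0 = ord0 -> iint01_invariant g) ->
  forall k : 'I_n.+1, k != ord0 -> iint01_invariant (tperm ord0 k).
Proof.
case: n => [|n] fix0 k k0; first by rewrite (ord1 k) eqxx in k0.
have [->|k1] := eqVneq k (lift ord0 ord0); first exact: iint01_invariant_swap01.
pose u := tperm (lift ord0 ord0) k.
have u0 : u ord0 = ord0 by rewrite tpermD // eq_sym.
have iu : iint01_invariant u by apply: fix0; [exact: perm_inj | exact: u0].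
have -> : fun_of_perm (tperm ord0 k) = u \o (tperm ord0 (lift ord0 ord0) \o u).
  have -> : tperm ord0 k = (tperm ord0 (lift ord0 ord0) ^ u)%g.
    by rewrite tpermJ u0 tpermL.
  by apply/funext => i; rewrite conjgE tpermV !permM.
by apply: iint01_invariant_comp => //; apply: iint01_invariant_comp => //;
  exact: iint01_invariant_swap01.
Qed.

Lemma iint01_invariant_inj n (g : 'I_n -> 'I_n) : injective g -> iint01_invariant g.
Proof.
elim: n g => [|n IH] g ginj.
  by move=> F _ _; congr F; apply: tuple0.
have fix0 (h : 'I_n.+1 -> 'I_n.+1) : injective h -> h ord0 = ord0 -> iint01_invariant h.
  move=> hinj h0; have [h' h'inj ->] := fix0_lift0 hinj h0.
  exact: iint01_invariant_lift0 (IH _ h'inj).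
have [g0|g0] := eqVneq (g ord0) ord0; first exact: fix0.
pose s := tperm ord0 (g ord0).
have -> : g = s \o (s \o g) by apply/funext => i /=; rewrite tpermK.
apply: iint01_invariant_comp; last exact: iint01_invariant_tperm0.
by apply: fix0; [exact: inj_comp (@perm_inj _ s) ginj | rewrite /= tpermR].
Qed.

End iint01_invariance.

Section order_statistics.
Variable R : realType.

Lemma sort_reindex_tuple n (p : 'S_n) (x : n.-tuple R) :
  sort <=%R (reindex_tuple p x) = sort <=%R x.
Proof.
apply/perm_sortP; [exact: le_total | exact: le_trans | exact: le_anti |].
by apply/tuple_permP; exists p.
Qed.

Lemma os_reindex_tuple n (p : 'S_n) k (x : n.-tuple R) :
  os k (reindex_tuple p x) = os k x.
Proof. by rewrite /os sort_reindex_tuple. Qed.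

Definition sorted_by n (p : 'S_n) :=
  [set x : n.-tuple R | sorted <=%R (reindex_tuple p x)].

Lemma os_sorted_by n (p : 'S_n) k x : sorted_by p x -> os k x = tnth x (p k).
Proof.
move=> px; rewrite -(os_reindex_tuple p) /os (sorted_sort le_trans px).
by rewrite -tnth_nth tnth_reindex_tuple.
Qed.

Lemma exists_sorted_by n (x : n.-tuple R) : exists p : 'S_n, sorted_by p x.
Proof.
have /tuple_permP[p xp] : perm_eq (sort <=%R x) x by rewrite perm_sort.
by exists p; rewrite /sorted_by /= -xp; exact: sort_sorted le_total _.
Qed.

Lemma sorted_byE n (p : 'S_n) : sorted_by p =
  \bigcap_(ij in [set: 'I_n * 'I_n])
    [set x | (ij.1 < ij.2)%N -> tnth x (p ij.1) <= tnth x (p ij.2)].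
Proof.
apply/seteqP; split => x /=.
  rewrite /sorted_by /= sorted_pairwise; last exact: le_trans.
  move=> /(pairwiseP 0) px [i j] _ /= ij; rewrite -!tnth_reindex_tuple !(tnth_nth 0).
  by apply: px; rewrite // !inE size_map size_enum_ord.
move=> px; rewrite /sorted_by /= sorted_pairwise; last exact: le_trans.
apply/(pairwiseP 0) => i j; rewrite !inE size_map size_enum_ord => ilt jlt ij.
have := px (Ordinal ilt, Ordinal jlt) I ij.
by rewrite /= -!tnth_reindex_tuple !(tnth_nth 0).
Qed.

Lemma measurable_sorted_by n (p : 'S_n) : measurable (sorted_by p).
Proof.
rewrite sorted_byE; apply: fin_bigcap_measurable; first exact: finite_finset.
move=> [i j] _ /=; case: ltnP => ij; last first.
  by rewrite (_ : [set _ | _] = setT) //; apply/seteqP; split.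
rewrite (_ : [set _ | _] = (fun x => tnth x (p i) <= tnth x (p j)) @^-1` [set true]).
  rewrite -[X in measurable X]setTI.
  by apply: measurable_fun_ler => //; exact: measurable_tnth.
by apply/seteqP; split => x /= h; [exact: h | move=> _; exact: h].
Qed.

Lemma measurable_os n (k : 'I_n) : measurable_fun setT (@os R n k).
Proof.
move=> _ B mB; rewrite setTI.
have -> : os k @^-1` B =
    \bigcup_(p in [set: 'S_n]) (sorted_by p `&` (@tnth n R ^~ (p k)) @^-1` B).
  apply/seteqP; split => x /=.
    have [p px] := exists_sorted_by x.
    by rewrite (os_sorted_by k px) => Bx; exists p.
  by move=> [p _ [px]]; rewrite /= (os_sorted_by k px).
apply: fin_bigcup_measurable; first exact: finite_finset.
move=> p _; apply: measurableI; first exact: measurable_sorted_by.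
by rewrite -[X in measurable X]setTI; exact: measurable_tnth.
Qed.

End order_statistics.

Section shifted_L_statistics.
Variable R : realType.

Lemma in_VL_reindex_tuple n (p : 'S_n) (h : n.-tuple R -> R) :
  in_VL h -> h \o reindex_tuple p = h.
Proof.
move=> [c0 [c hE]]; apply/funext => x /=; rewrite !hE.
by congr (_ + _); apply: eq_bigr => k _; rewrite os_reindex_tuple.
Qed.

Lemma measurable_in_VL n (h : n.-tuple R -> R) : in_VL h -> measurable_fun setT h.
Proof.
move=> [c0 [c hE]]; rewrite (_ : h = fun x => c0 + \sum_(k < n) c k * os k x).
  apply: measurable_funD => //; apply: measurable_sum => k.
  by apply: measurable_funM => //; exact: measurable_os.
by apply/funext => x; exact: hE.
Qed.

Lemma L2norm_perm_act n (p : 'S_n) (f h : n.-tuple R -> R) :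
  measurable_fun setT f -> in_VL h ->
  L2norm (perm_act p f \- h) = L2norm (f \- h).
Proof.
move=> mf hVL; rewrite /L2norm -{1}(in_VL_reindex_tuple p hVL).
congr (Num.sqrt (fine _)).
pose F x := (((f \- h) x) ^+ 2)%:E.
apply: (iint01_invariant_inj (@perm_inj _ p) (F := F)).
  apply/measurable_EFinP/measurable_funX/measurable_funB => //.
  exact: measurable_in_VL.
by move=> x; rewrite lee_fin sqr_ge0.
Qed.

End shifted_L_statistics.

Theorem proposition10 (R : realType) (n : nat) (f : n.-tuple R -> R)
    (pi : 'S_n) (fL : n.-tuple R -> R) :
  (1 <= n)%N -> sq_int f -> best_L_approx f fL ->
  best_L_approx (perm_act pi f) fL /\
  L2norm (perm_act pi f \- fL) = L2norm (f \- fL).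
Proof.
move=> _ [mf _] [fL_VL fL_min]; split; last exact: L2norm_perm_act.
by split=> // h hVL; rewrite !L2norm_perm_act //; exact: fL_min.
Qed.
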